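(* Let $(\mathbf{Z}_\kappa,\Sigma)$ be a ring of Euclidean integers for the infinite cardinal $\kappa$. Let $\eta,\gamma<\kappa$ and let $\mathbf{x}\in\mathbb{Z}^\kappa$ satisfy $x_\alpha=0$ for all $\alpha\ge 2^\eta$. Define $\mathbf{y}\in\mathbb{Z}^\kappa$ by $y_\delta=x_\alpha$ if $\delta=2^\eta\gamma+\alpha$ for some $\alpha<2^\eta$, and $y_\delta=0$ otherwise. Then $\sum_\alpha x_\alpha=\sum_\delta y_\delta$.
   Context: Ordinal arithmetic ($2^\eta$, $2^\eta\gamma+\alpha$) is ordinary ordinal arithmetic. Every ordinal $\alpha$ has a unique base-2 normal form $\alpha=2^{\alpha_1}+\dots+2^{\alpha_n}$ with $\alpha_1>\dots>\alpha_n$; put $L_\alpha=\{\alpha_1,\dots,\alpha_n\}$. Formal inclusion: $\alpha\sqsubseteq\beta$ iff $L_\alpha\subseteq L_\beta$. $\alpha\vee\beta$ is the ordinal $\gamma$ with $L_\gamma=L_\alpha\cup L_\beta$. For $\mathbf{x}\in\mathbb{Z}^\kappa$, $\mathbf{f}_{\mathbf{x}}(\alpha)=\sum_{\beta\sqsubseteq\alpha}x_\beta$. A ring of Euclidean integers for $\kappa$ is a discretely ordered commutative integral domain $\mathbf{Z}_\kappa$ containing $\mathbb{Z}$ as an ordered subring, together with a map $\Sigma:\mathbb{Z}^\kappa\to\mathbf{Z}_\kappa$, written $\Sigma(\mathbf{x})=\sum_\alpha x_\alpha$, such that: (0) if only finitely many $x_\alpha\neq0$ then $\sum_\alpha x_\alpha$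 is the ordinary finite sum; (RA) every element of $\mathbf{Z}_\kappa$ is $\sum_\alpha x_\alpha$ for some $\mathbf{x}$; (LA) $u\sum_\alpha x_\alpha+v\sum_\alpha y_\alpha=\sum_\alpha(ux_\alpha+vy_\alpha)$ for $u,v\in\mathbb{Z}$; (CA) if there is $\theta<\kappa$ with $\mathbf{f}_{\mathbf{x}}(\delta)\le\mathbf{f}_{\mathbf{y}}(\delta)$ for all $\delta<\kappa$ with $\theta\sqsubseteq\delta$, then $\sum_\alpha x_\alpha\le\sum_\alpha y_\alpha$; (PA) $(\sum_\alpha x_\alpha)(\sum_\beta y_\beta)=\sum_\gamma z_\gamma$ with $z_\gamma=\sum_{\alpha\vee\beta=\gamma}x_\alpha y_\beta$. *)

(* Ordinals below the infinite cardinal kappa are modelled by a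
   well-ordered type O whose order type is an infinite initial ordinal (cardinal);
   ordinal arithmetic on O is given by its (uniquely determining) transfinite
   recursion equations. *)
From mathcomp Require Import all_boot all_order all_algebra.
From Stdlib Require Import ClassicalEpsilon.
Set Implicit Arguments. Unset Strict Implicit. Unset Printing Implicit Defensive.
Import Order.TTheory GRing.Theory Num.Theory.

Section OrdDefs.
Variables (d : Order.disp_t) (O : orderType d).

Definition is_succ_of (a s : O) : Prop :=
  (a < s)%O /\ forall b, (a < b)%O -> (s <= b)%O.

Definition is_limit (l : O) : Prop :=
  (exists b, (b < l)%O) /\ forall b, (b < l)%O -> exists c, (b < c)%O /\ (c < l)%O.

Definition is_lub (P : O -> Prop) (u : O) : Prop :=
  (forall b, P b -> (b <= u)%O) /\
  forall u', (forall b, P b -> (b <= u')%O) -> (u <= u')%O.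

Definition infinite_cardinal_order : Prop :=
  well_founded (fun a b : O => (a < b)%O) /\
  (forall s : seq O, exists a, a \notin s) /\
  (forall o : O, ~ exists f : O -> O, injective f /\ forall a, (f a < o)%O).

End OrdDefs.

Record ordinal_arith (d : Order.disp_t) (O : orderType d) := OrdinalArith {
  o0 : O;
  oadd : O -> O -> O;
  omul : O -> O -> O;
  oexp2 : O -> O;
  o0_min : forall a, (o0 <= a)%O;
  oadd0 : forall a, oadd a o0 = a;
  oaddS : forall a b s, is_succ_of b s -> is_succ_of (oadd a b) (oadd a s);
  oaddL : forall a l, is_limit l ->
            is_lub (fun c => exists2 b, (b < l)%O & c = oadd a b) (oadd a l);
  omul0 : forall a, omul a o0 = o0;
  omulS : forall a b s, is_succ_of b s -> omul a s = oadd (omul a b) a;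
  omulL : forall a l, is_limit l ->
            is_lub (fun c => exists2 b, (b < l)%O & c = omul a b) (omul a l);
  oexp20 : forall s, is_succ_of o0 s -> oexp2 o0 = s;
  oexp2S : forall b s, is_succ_of b s -> oexp2 s = oadd (oexp2 b) (oexp2 b);
  oexp2L : forall l, is_limit l ->
            is_lub (fun c => exists2 b, (b < l)%O & c = oexp2 b) (oexp2 l)
}.

Section BaseTwo.
Variables (d : Order.disp_t) (O : orderType d) (A : ordinal_arith O).

Definition oval (s : seq O) : O :=
  foldr (fun e acc => oadd A (oexp2 A e) acc) (o0 A) s.

Definition is_nf (a : O) (s : seq O) : Prop :=
  sorted (fun u v => (v < u)%O) s /\ a = oval s.

Definition L (a : O) : seq O := epsilon (inhabits [::]) (fun s => is_nf a s).

Definition fsub (b a : O) : Prop := {subset L b <= L a}.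

Definition fsubs (a : O) : seq O :=
  [seq oval (mask m (L a)) | m : (size (L a)).-tuple bool].

Definition is_join (a b g : O) : bool := perm_eq (undup (L a ++ L b)) (L g).

Definition fx (x : O -> int) (a : O) : int := \sum_(b <- fsubs a) x b.

Definition zprod (x y : O -> int) (g : O) : int :=
  \sum_(a <- fsubs g) \sum_(b <- fsubs g | is_join a b g) (x a * y b)%R.

End BaseTwo.

Local Open Scope ring_scope.

Definition discretely_ordered (R : realDomainType) : Prop :=
  forall r : R, ~ (0 < r /\ r < 1).

Record euclidean_integers (d : Order.disp_t) (O : orderType d) (A : ordinal_arith O)
    (R : realDomainType) := EuclideanIntegers {
  Sig : (O -> int) -> R;
  Sig_fin : forall (x : O -> int) (s : seq O), uniq s ->
     (forall a, x a != 0 -> a \in s) -> Sig x = \sum_(a <- s) (x a)%:~R;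
  Sig_RA : forall r : R, exists x, Sig x = r;
  Sig_LA : forall (u v : int) (x y : O -> int),
     u%:~R * Sig x + v%:~R * Sig y = Sig (fun a => u * x a + v * y a);
  Sig_CA : forall x y : O -> int,
     (exists theta, forall delta, fsub A theta delta -> fx A x delta <= fx A y delta) ->
     Sig x <= Sig y;
  Sig_PA : forall x y : O -> int, Sig x * Sig y = Sig (zprod A x y)
}.

From mathcomp Require Import all_boot all_order all_algebra.
From Stdlib Require Import Classical ClassicalEpsilon.
Import Order.TTheory GRing.Theory Num.Theory.
Set Implicit Arguments. Unset Strict Implicit. Unset Printing Implicit Defensive.

(* Split the exponents of the normal form of delta into those >= eta and those
   < eta: L_delta = H ++ K.  The b with b ⊑ delta are the oval (t1 ++ t2) with
   t1 ⊑ H, t2 ⊑ K, and oval (t1 ++ t2) = oval t1 + oval t2 with oval t2 < 2^eta.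
   The ordinal P = 2^eta gamma has no exponent below eta (by induction on gamma:
   two distinct ordinals without such exponents differ by at least 2^eta).
   Hence if P ⊑ delta, only t1 = [::] contributes to f_x(delta) and only
   t1 = L_P contributes to f_y(delta), and both equal the sum of x (oval t2)
   over t2 ⊑ K.  Axiom (CA) with theta = P, applied both ways, gives the
   equality. *)

Section Subseqs.
Variable T : eqType.

Fixpoint subseqs (s : seq T) : seq (seq T) :=
  if s is a :: s' then map (cons a) (subseqs s') ++ subseqs s' else [:: [::]].

Lemma cons_injr (a : T) : injective (cons a).
Proof. by move=> u v []. Qed.

Lemma mem_subseqs s t : (t \in subseqs s) = subseq t s.
Proof.
elim: s t => [|a s IH] t /=; first by case: t.
rewrite mem_cat IH; case: t => [|b t]; first by rewrite sub0seq orbT.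
have [->|ne] := eqVneq b a; last first.
  by rewrite (introF mapP) //= => -[u _ [/eqP]]; rewrite (negbTE ne).
rewrite (mem_map (@cons_injr a)) IH /=.
by apply/orP/idP => [[//|/cons_subseq //]|->]; left.
Qed.

Lemma subseqs_uniq s : uniq s -> uniq (subseqs s).
Proof.
elim: s => [|a s IH] //= /andP [as_ us].
rewrite cat_uniq (map_inj_uniq (@cons_injr a)) IH //= andbT.
apply/hasPn => t; rewrite mem_subseqs => ts; apply/mapP => -[u _ Et].
by move: as_; rewrite (mem_subseq ts) // Et mem_head.
Qed.

Section BigSubseqs.
Variable V : nmodType.
Local Open Scope ring_scope.

Lemma big_tuple_cons n (G : n.+1.-tuple bool -> V) :
  \sum_(m : n.+1.-tuple bool) G m =
  \sum_(b : bool) \sum_(m : n.-tuple bool) G [tuple of b :: m].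
Proof.
rewrite pair_big (reindex (fun p : bool * n.-tuple bool => [tuple of p.1 :: p.2])) //=.
exists (fun m : n.+1.-tuple bool => (thead m, [tuple of behead m])).
  by move=> [b m] _; congr pair; apply: val_inj.
by move=> m _; rewrite -tuple_eta.
Qed.

Lemma big_mask_subseqs (F : seq T -> V) s :
  \sum_(m : (size s).-tuple bool) F (mask m s) = \sum_(t <- subseqs s) F t.
Proof.
elim: s F => [|a s IH] F.
  rewrite big_seq1 (big_pred1 [tuple]) ?mask0 // => t.
  by apply/esym/eqP/val_inj; case: t => [[]].
by rewrite big_tuple_cons big_bool /= big_cat big_map IH (IH (fun t => F (a :: t))).
Qed.

Lemma big_subseqs_cat (F : seq T -> V) u v :
  \sum_(t <- subseqs (u ++ v)) F t =
  \sum_(t1 <- subseqs u) \sum_(t2 <- subseqs v) F (t1 ++ t2).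
Proof.
elim: u F => [|a u IH] F /=; first by rewrite big_seq1.
by rewrite !big_cat !big_map (IH F) (IH (fun t => F (a :: t))).
Qed.

End BigSubseqs.
End Subseqs.

Section Ordinals.
Variables (d : Order.disp_t) (O : orderType d) (HO : infinite_cardinal_order O).
Variable A : ordinal_arith O.
Local Open Scope order_scope.
Local Notation zero := (o0 A).
Local Notation "a +o b" := (oadd A a b) (at level 50, left associativity).
Local Notation "a *o b" := (omul A a b) (at level 40, left associativity).
Local Notation exp2 := (oexp2 A).
Implicit Types (a b c e l u v w : O).

Lemma ltO_ind (P : O -> Prop) :
  (forall a, (forall b, b < a -> P b) -> P a) -> forall a, P a.
Proof. exact: (well_founded_ind HO.1). Qed.

Lemma ex_least (P : O -> Prop) :
  (exists a, P a) -> exists a, P a /\ forall b, P b -> a <= b.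
Proof.
move=> [a Pa]; apply: NNPP => noleast.
suff: forall c, ~ P c by move/(_ a).
elim/ltO_ind => c IH Pc; apply: noleast; exists c; split => // b Pb.
by rewrite leNgt; apply/negP => /IH; apply.
Qed.

Lemma zero_lt a : (zero < a) = (a != zero).
Proof. by rewrite lt_def o0_min andbT. Qed.

Lemma succ_uniq a (s s' : O) : is_succ_of a s -> is_succ_of a s' -> s = s'.
Proof. by move=> [as_ min] [as' min']; apply: le_anti; rewrite min // min'. Qed.

Lemma succ_le a (s : O) b : is_succ_of a s -> b < s -> b <= a.
Proof. by move=> [_ min] bs; rewrite leNgt; apply/negP => /min; rewrite leNgt bs. Qed.

Lemma ordinal_cases c : c = zero \/ (exists b, is_succ_of b c) \/ is_limit c.
Proof.
have [->|c0] := eqVneq c zero; [by left | right].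
case: (classic (exists b, is_succ_of b c)) => [|nsucc]; [by left | right].
split; first by exists zero; rewrite zero_lt.
move=> b bc; have [s [bs least]] := @ex_least (fun s => b < s) (ex_intro _ c bc).
exists s; split => //; rewrite lt_def least // andbT.
by apply/eqP => cs; apply: nsucc; exists b; rewrite cs.
Qed.

Lemma lt_lub_image (f : O -> O) l u e :
  is_lub (fun c => exists2 b, b < l & c = f b) u -> e < u -> exists2 b, b < l & e < f b.
Proof.
move=> [_ least] eu; apply: NNPP => none; move: eu; rewrite ltNge => /negP; apply.
by apply: least => _ [b bl ->]; rewrite leNgt; apply/negP => efb; apply: none; exists b.
Qed.

Lemma oadd_le2l a : {mono oadd A a : b c / b <= c}.
Proof.
apply: le_mono => b c; elim/ltO_ind: c b => c IH b bc.
have [c0|[[c' hc]|hl]] := ordinal_cases c.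
- by rewrite c0 ltNge o0_min in bc.
- have [lt_c' _] := oaddS A a hc.
  move: (succ_le hc bc); rewrite le_eqVlt => /predU1P [-> //|bc'].
  exact: lt_trans (IH _ hc.1 _ bc') lt_c'.
- have [c2 [bc2 c2c]] := hl.2 _ bc.
  apply: lt_le_trans (IH _ c2c _ bc2) _.
  by apply: (oaddL A a hl).1; exists c2.
Qed.

Lemma oadd_lt2l a : {mono oadd A a : b c / b < c}.
Proof. exact/leW_mono/oadd_le2l. Qed.

Lemma oaddI a : injective (oadd A a).
Proof. exact/inc_inj/oadd_le2l. Qed.

Lemma ole_addl a b : b <= a +o b.
Proof.
elim/ltO_ind: b => b IH; rewrite leNgt; apply/negP => h.
by have := IH _ h; rewrite leNgt oadd_lt2l h.
Qed.

Lemma ole_addr a b : a <= a +o b.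
Proof. by rewrite -{1}(oadd0 A a) oadd_le2l o0_min. Qed.

Lemma oadd_sub a c : a <= c -> exists w, a +o w = c.
Proof.
move=> ac; have [w [cw least]] :=
  ex_least (ex_intro (fun w => c <= a +o w) c (ole_addl a c)).
exists w; apply: le_anti; rewrite cw andbT.
have below v : v < w -> a +o v < c.
  by move=> vw; rewrite ltNge; apply/negP => /least; rewrite leNgt vw.
have [w0|[[v hv]|hl]] := ordinal_cases w.
- by rewrite w0 oadd0.
- by apply: (oaddS A a hv).2; apply: below hv.1.
- by apply: (oaddL A a hl).2 => _ [v vw ->]; apply/ltW/below.
Qed.

Lemma oadd0l b : zero +o b = b.
Proof.
elim/ltO_ind: b => b IH.
have [->|[[c hc]|hl]] := ordinal_cases b.
- exact: oadd0.
- by have := oaddS A zero hc; rewrite IH; [move/succ_uniq; apply | exact: hc.1].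
- apply: le_anti; rewrite ole_addl andbT.
  by apply: (oaddL A zero hl).2 => _ [v vb ->]; rewrite IH // ltW.
Qed.

Lemma oadd_limit a l : is_limit l -> is_limit (a +o l).
Proof.
move=> hl; split.
  by have [b bl] := hl.1; exists (a +o b); rewrite oadd_lt2l.
move=> e /(lt_lub_image (oaddL A a hl)) [b bl eab].
by exists (a +o b); rewrite eab oadd_lt2l.
Qed.

Lemma oaddA a b c : a +o b +o c = a +o (b +o c).
Proof.
elim/ltO_ind: c => c IH.
have [->|[[c' hc]|hl]] := ordinal_cases c; first by rewrite !oadd0.
  have := oaddS A (a +o b) hc; rewrite IH; last exact: hc.1.
  by move/succ_uniq; apply; apply: oaddS; apply: oaddS.
apply: le_anti; apply/andP; split.
  apply: (oaddL A _ hl).2 => _ [v vc ->].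
  by rewrite IH // oadd_le2l ltW // oadd_lt2l.
apply: (oaddL A a (oadd_limit b hl)).2 => _ [e ebc ->].
have [v vc ebv] := lt_lub_image (oaddL A b hl) ebc.
apply: le_trans (_ : a +o (b +o v) <= _); first by rewrite oadd_le2l ltW.
by rewrite -IH //; apply: (oaddL A _ hl).1; exists v.
Qed.

Lemma oadd_le2r a b c : a <= b -> a +o c <= b +o c.
Proof. by move=> /oadd_sub [w <-]; rewrite oaddA oadd_le2l ole_addl. Qed.

Lemma exists_gt a : exists c, a < c.
Proof.
have [u] := HO.2.1 [:: zero]; rewrite mem_seq1 => u0.
by exists (a +o u); rewrite -{1}(oadd0 A a) oadd_lt2l zero_lt.
Qed.

Lemma succ_exists a : exists s, is_succ_of a s.
Proof. by have [s []] := ex_least (exists_gt a); exists s. Qed.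

Lemma oexp2_gt0 b : zero < exp2 b.
Proof.
have [s hs] := succ_exists zero.
have e0 : zero < exp2 zero by rewrite (oexp20 hs); exact: hs.1.
elim/ltO_ind: b => b IH.
have [->|[[c hc]|hl]] := ordinal_cases b => //.
  by rewrite (oexp2S A hc); apply: lt_le_trans (IH _ hc.1) (ole_addr _ _).
apply: lt_le_trans e0 _; apply: (oexp2L A hl).1; exists zero => //.
by have [c cl] := hl.1; apply: le_lt_trans (o0_min A c) cl.
Qed.

Lemma oexp2_le2 : {mono oexp2 A : b c / b <= c}.
Proof.
apply: le_mono => b c; elim/ltO_ind: c b => c IH b bc.
have [c0|[[c' hc]|hl]] := ordinal_cases c.
- by rewrite c0 ltNge o0_min in bc.
- have lt_c' : exp2 c' < exp2 c.
    by rewrite (oexp2S A hc) -{1}(oadd0 A (exp2 c')) oadd_lt2l oexp2_gt0.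
  move: (succ_le hc bc); rewrite le_eqVlt => /predU1P [-> //|bc'].
  exact: lt_trans (IH _ hc.1 _ bc') lt_c'.
- have [c2 [bc2 c2c]] := hl.2 _ bc.
  apply: lt_le_trans (IH _ c2c _ bc2) _.
  by apply: (oexp2L A hl).1; exists c2.
Qed.

Lemma oexp2_lt2 : {mono oexp2 A : b c / b < c}.
Proof. exact/leW_mono/oexp2_le2. Qed.

Lemma ole_exp2 b : b <= exp2 b.
Proof.
elim/ltO_ind: b => b IH; rewrite leNgt; apply/negP => h.
by have := IH _ h; rewrite leNgt oexp2_lt2 h.
Qed.

Lemma oexp2_double b c : b < c -> exp2 b +o exp2 b <= exp2 c.
Proof.
by move=> bc; have [s hs] := succ_exists b; rewrite -(oexp2S A hs) oexp2_le2 hs.2.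
Qed.

Local Notation decr := (sorted (fun u v : O => v < u)).
Local Notation oval := (oval A).
Local Notation L := (L A).

Lemma gtO_trans : transitive (fun u v : O => v < u).
Proof. exact: rev_trans lt_trans. Qed.

Lemma decr_lt_all e f s : decr (e :: s) -> e < f -> all (< f) (e :: s).
Proof.
move=> ds ef /=; rewrite ef; apply: sub_all (order_path_min gtO_trans ds).
by move=> g /= ge; apply: lt_trans ef.
Qed.

Lemma decr_uniq s : decr s -> uniq s.
Proof. exact: sorted_uniq gtO_trans ltxx s. Qed.

Lemma decr_subset_subseq s t : decr s -> decr t -> {subset s <= t} -> subseq s t.
Proof.
move=> ds dt st; suff -> : s = [seq e <- t | e \in s] by apply: filter_subseq.
apply: (irr_sorted_eq gtO_trans ltxx ds (sorted_filter gtO_trans _ dt)) => e.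
by rewrite mem_filter andb_idr //; apply: st.
Qed.

Lemma oval_eq0 s : (oval s == zero) = (s == [::]).
Proof.
case: s => [|e s]; first by rewrite !eqxx.
by apply/negbTE; rewrite -zero_lt (lt_le_trans (oexp2_gt0 e)) ?ole_addr.
Qed.

Lemma oval_ltE s e : decr s -> (oval s < exp2 e) = all (< e) s.
Proof.
elim: s e => [|f s IH] e ds; first by rewrite oexp2_gt0.
apply/idP/idP => [lt_e|/= /andP [fe _]].
  by apply: decr_lt_all => //; rewrite -oexp2_lt2 (le_lt_trans (ole_addr _ _) lt_e).
apply: lt_le_trans (oexp2_double fe); rewrite /= oadd_lt2l IH ?(path_sorted ds) //.
exact: order_path_min gtO_trans ds.
Qed.

Lemma oval_inj s t : decr s -> decr t -> oval s = oval t -> s = t.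
Proof.
elim: s t => [|e s IH] [|f t] // ds dt.
- by move/esym/eqP; rewrite oval_eq0.
- by move/eqP; rewrite oval_eq0.
move=> E; case: (ltgtP e f) => [ef|fe|ef].
- by move: (decr_lt_all ds ef); rewrite -oval_ltE // E ltNge ole_addr.
- by move: (decr_lt_all dt fe); rewrite -oval_ltE // -E ltNge ole_addr.
- move: E ds; rewrite ef /= => /oaddI E ds; congr (_ :: _).
  exact: IH (path_sorted ds) (path_sorted dt) E.
Qed.

Lemma nf_exists a : exists2 s, decr s & oval s = a.
Proof.
elim/ltO_ind: a => a IH.
have [->|] := eqVneq a zero; first by exists [::].
rewrite -zero_lt => a0; have [c0 ac0] := exists_gt a.
have [c [ac least]] := @ex_least (fun c => a < exp2 c)
  (ex_intro _ c0 (lt_le_trans ac0 (ole_exp2 c0))).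
have below b : b < c -> exp2 b <= a.
  by move=> bc; rewrite leNgt; apply/negP => /least; rewrite leNgt bc.
have [c_0|[[e he]|hl]] := ordinal_cases c.
- have [s hs] := succ_exists zero.
  by move: ac; rewrite c_0 (oexp20 hs) => /(succ_le hs); rewrite leNgt a0.
- have [r Er] := oadd_sub (below _ he.1).
  have r_lt : r < exp2 e by move: ac; rewrite (oexp2S A he) -Er oadd_lt2l.
  have [t dt Et] := IH r (lt_le_trans r_lt (below _ he.1)).
  exists (e :: t); last by rewrite /= Et.
  by rewrite /= path_min_sorted // -oval_ltE // Et.
- have : exp2 c <= a by apply: (oexp2L A hl).2 => _ [b bc ->]; apply: below.
  by rewrite leNgt ac.
Qed.

Lemma L_is_nf a : is_nf A a (L a).
Proof.
have [s ds Es] := nf_exists a.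
exact: epsilon_spec (inhabits [::]) (fun s => is_nf A a s)
  (ex_intro _ s (conj ds (esym Es))).
Qed.

Lemma L_decr a : decr (L a).
Proof. exact: (L_is_nf a).1. Qed.

Lemma LK : cancel L oval.
Proof. by move=> a; rewrite -(L_is_nf a).2. Qed.

Lemma ovalK s : decr s -> L (oval s) = s.
Proof. by move=> ds; apply: oval_inj ds _; rewrite ?L_decr ?LK. Qed.

Lemma oval_cat s t : oval (s ++ t) = oval s +o oval t.
Proof. by elim: s => [|e s IH] /=; rewrite ?oadd0l // IH oaddA. Qed.

Lemma fx_subseqs (F : O -> int) a :
  fx A F a = (\sum_(t <- subseqs (L a)) F (oval t))%R.
Proof.
rewrite /fx /fsubs big_map big_enum /= -(big_mask_subseqs (fun t => F (oval t))).
by apply: eq_bigl => m; rewrite inE.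
Qed.

Section Truncation.
Variable eta : O.
Local Notation hi s := (filter (>= eta) s).
Local Notation lo s := (filter (< eta) s).

Definition nf_ge c : bool := all (>= eta) (L c).

Lemma hi_nil s : all (< eta) s -> hi s = [::].
Proof.
move=> /allP lt_eta; rewrite -(filter_pred0 s); apply: eq_in_filter => e /lt_eta.
by rewrite /= leNgt => ->.
Qed.

Lemma decr_split s : decr s -> s = hi s ++ lo s.
Proof.
elim: s => //= e s IH ds; case: leP => [le_e | lt_e] /=.
  by rewrite -IH // (path_sorted ds).
have /andP [_ lt_s] := decr_lt_all ds lt_e.
by rewrite hi_nil //; congr (_ :: _); apply/esym/all_filterP.
Qed.

Lemma hi_L_add Y W : nf_ge Y -> W < exp2 eta -> hi (L (Y +o W)) = L Y.
Proof.
rewrite -(LK W) oval_ltE ?L_decr // => hY hW.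
rewrite -{1}(LK Y) -oval_cat ovalK.
  by rewrite filter_cat (all_filterP hY) hi_nil ?cats0.
rewrite (sorted_pairwise gtO_trans) pairwise_cat -!(sorted_pairwise gtO_trans).
rewrite !L_decr !andbT.
by apply/allrelP => u v /(allP hY) hu /(allP hW) hv; apply: lt_le_trans hu.
Qed.

Lemma nf_ge_addN Y W : nf_ge Y -> zero < W -> W < exp2 eta -> ~~ nf_ge (Y +o W).
Proof.
move=> hY W0 hW; apply/negP => /all_filterP hYW; move: W0; rewrite zero_lt => /eqP; apply.
apply: (@oaddI Y W zero).
by rewrite (oadd0 A) -{2}(LK Y) -(hi_L_add hY hW) hYW LK.
Qed.

Lemma nf_geN_split c : ~~ nf_ge c ->
  exists U V, [/\ c = U +o V, nf_ge U, zero < V & V < exp2 eta].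
Proof.
move=> hc; have dc := L_decr c.
have [dhi dlo] : decr (hi (L c)) /\ decr (lo (L c)).
  by split; exact: (sorted_filter gtO_trans _ dc).
exists (oval (hi (L c))), (oval (lo (L c))); split.
- by rewrite -oval_cat -decr_split ?LK.
- by rewrite /nf_ge ovalK ?filter_all.
- rewrite zero_lt oval_eq0; apply: contraNneq hc => lo0.
  by rewrite /nf_ge (decr_split dc) lo0 cats0 filter_all.
- by rewrite oval_ltE ?filter_all.
Qed.

Lemma nf_ge_gap Y U : nf_ge Y -> nf_ge U -> Y < U -> Y +o exp2 eta <= U.
Proof.
move=> hY hU YU; have [W EW] := oadd_sub (ltW YU); rewrite -EW in hU YU *.
rewrite oadd_le2l leNgt; apply/negP => hW; move: hU; apply/negP.
by apply: nf_ge_addN hY _ hW; rewrite -(oadd_lt2l Y) (oadd0 A).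
Qed.

Lemma nf_ge_mul g : nf_ge (exp2 eta *o g).
Proof.
elim/ltO_ind: g => g IH.
have [->|g_cases] := ordinal_cases g.
  by rewrite omul0 /nf_ge -[zero]/(oval [::]) ovalK.
apply: contraT => /nf_geN_split [U [V [EUV hU V0 V_lt]]].
have U_lt : U < U +o V by rewrite -{1}(oadd0 A U) oadd_lt2l.
have UV_lt : U +o V < U +o exp2 eta by rewrite oadd_lt2l.
case: g_cases => [[b hb]|hl].
- move: EUV; rewrite (omulS A _ hb); set Y := exp2 eta *o b => EUV.
  case: (ltP Y U) => [YU|UY].
  + by have := nf_ge_gap (IH b hb.1) hU YU; rewrite EUV leNgt U_lt.
  + by have := oadd_le2r (exp2 eta) UY; rewrite EUV leNgt UV_lt.
- have := lt_lub_image (omulL A (exp2 eta) hl); rewrite EUV => /(_ U U_lt) [b bg Ub].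
  have Yb_le : exp2 eta *o b <= U +o V.
    by rewrite -EUV; apply: (omulL A _ hl).1; exists b.
  by have := nf_ge_gap hU (IH b bg) Ub; rewrite leNgt (le_lt_trans Yb_le UV_lt).
Qed.

Lemma fx_split (F : O -> int) delta : fx A F delta =
  (\sum_(t1 <- subseqs (hi (L delta))) \sum_(t2 <- subseqs (lo (L delta)))
     F (oval (t1 ++ t2)))%R.
Proof. by rewrite fx_subseqs {1}(decr_split (L_decr delta)) big_subseqs_cat. Qed.

Lemma hi_L_oval_cat s t1 t2 : decr s -> subseq t1 (hi s) -> subseq t2 (lo s) ->
  hi (L (oval (t1 ++ t2))) = t1.
Proof.
move=> ds s1 s2; rewrite ovalK.
  move: s1 s2; rewrite !subseq_filter => /andP [/all_filterP hi1 _] /andP [lo2 _].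
  by rewrite filter_cat hi1 hi_nil ?cats0.
have sub : subseq (t1 ++ t2) s by rewrite (decr_split ds) cat_subseq.
exact: (subseq_sorted gtO_trans sub ds).
Qed.

Lemma fx_low x delta : (forall a, exp2 eta <= a -> x a = 0%R) ->
  fx A x delta = (\sum_(t <- subseqs (lo (L delta))) x (oval t))%R.
Proof.
move=> hx; have uhi := filter_uniq (>= eta) (decr_uniq (L_decr delta)).
rewrite fx_split (bigD1_seq [::]) ?mem_subseqs ?sub0seq ?subseqs_uniq //=.
rewrite [X in (_ + X)%R]big1_seq ?addr0 // => -[|e t1] /andP [// _].
rewrite mem_subseqs subseq_filter => /andP [/andP [le_e _] _].
apply: big1 => t2 _; apply: hx; rewrite /= (le_trans _ (ole_addr _ _)) //.
by rewrite oexp2_le2.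
Qed.

Lemma fx_shift x y P delta : nf_ge P -> fsub A P delta ->
  (forall a, a < exp2 eta -> y (P +o a) = x a) ->
  (forall c, (forall a, a < exp2 eta -> c <> P +o a) -> y c = 0%R) ->
  fx A y delta = (\sum_(t <- subseqs (lo (L delta))) x (oval t))%R.
Proof.
move=> hP Pdelta hy1 hy0; have dL := L_decr delta.
have uhi := filter_uniq (>= eta) (decr_uniq dL).
have P_hi : subseq (L P) (hi (L delta)).
  apply: decr_subset_subseq (L_decr P) (sorted_filter gtO_trans _ dL) _ => e eP.
  by rewrite mem_filter (allP hP e eP) Pdelta.
rewrite fx_split (bigD1_seq (L P)) ?mem_subseqs ?subseqs_uniq //=.
rewrite [X in (_ + X)%R]big1_seq ?addr0; last first.
  move=> t1 /andP [ne]; rewrite mem_subseqs => s1.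
  apply: big1_seq => t2 /andP [_]; rewrite mem_subseqs => s2.
  apply: hy0 => a lt_a E; move/eqP: ne; apply.
  by rewrite -(hi_L_oval_cat dL s1 s2) E hi_L_add.
apply: eq_big_seq => t2; rewrite mem_subseqs => s2; rewrite oval_cat LK hy1 //.
rewrite oval_ltE ?(subseq_sorted gtO_trans s2) ?(sorted_filter gtO_trans) //.
by move: s2; rewrite subseq_filter => /andP [].
Qed.

End Truncation.
End Ordinals.

Theorem mainTheorem4 (d : Order.disp_t) (O : orderType d)
  (HO : infinite_cardinal_order O) (A : ordinal_arith O)
  (R : realDomainType) (HR : discretely_ordered R)
  (E : euclidean_integers A R)
  (eta gamma : O) (x y : O -> int)
  (hx : forall a, (oexp2 A eta <= a)%O -> x a = 0%R)
  (hy1 : forall a, (a < oexp2 A eta)%O ->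
           y (oadd A (omul A (oexp2 A eta) gamma) a) = x a)
  (hy0 : forall delta, (forall a, (a < oexp2 A eta)%O ->
           delta <> oadd A (omul A (oexp2 A eta) gamma) a) -> y delta = 0%R) :
  Sig E x = Sig E y.
Proof.
have fx_xy delta :
    fsub A (omul A (oexp2 A eta) gamma) delta -> fx A x delta = fx A y delta.
  move=> sub; rewrite (fx_low HO _ hx).
  by rewrite (fx_shift HO (nf_ge_mul HO A eta gamma) sub hy1 hy0).
apply/eqP; rewrite eq_le; apply/andP; split; apply: Sig_CA;
  by exists (omul A (oexp2 A eta) gamma) => delta /fx_xy ->.
Qed.
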